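(* Let $k,r,h$ be positive integers such that $\ell=\frac{k+h}{r}$ is an integer, and let $a,b$ be positive integers with $\mathbb{F}_{2^a}\subseteq\mathbb{F}_{2^b}$. Suppose there is a set $S_1=\{\xi_1,\ldots,\xi_{r+1}\}\subseteq\mathbb{F}_{2^a}$ of size $r+1$ which is $h$-wise weakly independent over $\mathbb{F}_2$ if $h$ is even, and $(h+1)$-wise weakly independent over $\mathbb{F}_2$ if $h$ is odd. Suppose further there is a set $S_2=\{\lambda_1,\ldots,\lambda_\ell\}\subseteq\mathbb{F}_{2^b}$ of size $\ell$ that is $h$-wise independent over $\mathbb{F}_{2^a}$. Set $\alpha_{i,s}=\lambda_i\xi_s$ for $i\in[\ell]$, $s\in[r+1]$. Then the code $\mathcal{C}\subseteq\mathbb{F}_{2^b}^{\ell(r+1)}$ consisting of all $(x_{i,s})_{i\in[\ell],s\in[r+1]}$ satisfying $\sum_{i=1}^{\ell}\sum_{s=1}^{r+1}\alpha_{i,s}^{2^{j-1}}x_{i,s}=0$ for $j=1,\ldots,h$ and $\sum_{s=1}^{r+1}x_{i,s}=0$ for $i=1,\ldots,\ell$ is a maximally recoverable local $(k,r,h)$-code over $\mathbb{F}_{2^b}$, whose local groups are the sets $\{(i,s):s\in[r+1]\}$, $i\in[\ell]$.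
   Context: A set $S\subseteq\mathbb{F}$ is $t$-wise weakly independent over $\mathbb{F}_2$ if no subset $T\subseteq S$ with $2\le|T|\le t$ has sum of its elements equal to $0$ (such a set may contain $0$). A set $S\subseteq\mathbb{F}$ is $t$-wise independent over a subfield $\mathbb{F}'$ if every subset of size at most $t$ is linearly independent over $\mathbb{F}'$. For positive integers $k,r,h$ with $r\mid(k+h)$, a local $(k,r,h)$-code over a finite field $\mathbb{F}$ is a linear systematic code of dimension $k$ and length $k+h+\frac{k+h}{r}$ consisting of $k$ data symbols, $h$ heavy parity symbols (each a linear combination of all data symbols), and, after partitioning the $k+h$ data and heavy symbols into groups of size $r$, one local parity per group equal to the sum of the group's symbols; a local group is such a group plus its local parity. The code is maximally recoverable if for every set $E$ of coordinates containing exactly one coordinate from each local group, puncturing the code in $E$ yields a maximum distance separable $[k+h,k]$ code (minimum distance $h+1$). *)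

From HB Require Import structures.
From mathcomp Require Import all_boot all_order all_algebra all_field.
Set Implicit Arguments. Unset Strict Implicit. Unset Printing Implicit Defensive.
Import GRing.Theory.
Local Open Scope ring_scope.

Definition weakly_indep (F : finFieldType) (t : nat) (S : {set F}) : Prop :=
  forall T : {set F}, T \subset S -> (2 <= #|T|)%N -> (#|T| <= t)%N ->
    \sum_(x in T) x != 0.

Definition wise_indep (F : fieldType) (L : fieldExtType F) (n t : nat)
    (lam : 'I_n -> L) : Prop :=
  forall T : {set 'I_n}, (#|T| <= t)%N -> free [seq lam i | i in T].

(* Coordinates of a code of length l*(r+1) are indexed as entries (i,s) of an
   l x (r+1) matrix; the local groups are the rows. *)
Definition weight (L : fieldType) (l m : nat) (x : 'M[L]_(l, m)) : nat :=
  #|[set c : 'I_l * 'I_m | x c.1 c.2 != 0]|.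

Definition min_dist (L : fieldType) (l m : nat) (U : {vspace 'M[L]_(l, m)})
    (d : nat) : Prop :=
  (exists y, y \in U /\ y != 0 /\ weight y = d) /\
  (forall y, y \in U -> y != 0 -> (d <= weight y)%N).

(* C is a local (k,r,h)-code whose local groups are the rows
   {(i,s) : s in [r+1]}, i in [l]: l*r = k+h, C is linear (a subspace) of
   dimension k, in each row i there is a local-parity coordinate p i equal to the
   sum of the other r symbols of the row; the remaining k+h coordinates consist
   of a set D of k data coordinates (systematic: every assignment of the data
   symbols extends uniquely to a codeword) and h heavy parities, each a linear
   combination of the data symbols. *)
Definition local_code (L : fieldType) (k r h l : nat)
    (C : {vspace 'M[L]_(l, r.+1)}) : Prop :=
  (l * r = k + h)%N /\ \dim C = k /\
  exists (p : 'I_l -> 'I_r.+1) (D : {set 'I_l * 'I_r.+1}),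
    #|D| = k /\
    (forall c, c \in D -> c.2 != p c.1) /\
    (forall y : 'M[L]_(l, r.+1), exists! x,
        x \in C /\ forall c, c \in D -> x c.1 c.2 = y c.1 c.2) /\
    (forall c : 'I_l * 'I_r.+1, c \notin D -> c.2 != p c.1 ->
        exists w : 'I_l * 'I_r.+1 -> L, forall x, x \in C ->
          x c.1 c.2 = \sum_(d in D) w d * x d.1 d.2) /\
    (forall x, x \in C -> forall i, x i (p i) = \sum_(s | s != p i) x i s).

(* Puncturing C in E (one coordinate E i from each row i): the deleted
   coordinates are represented by zero entries, so weights are unchanged. *)
Definition puncture (L : fieldType) (l m : nat) (E : 'I_l -> 'I_m)
    (x : 'M[L]_(l, m)) : 'M[L]_(l, m) :=
  \matrix_(i, s) (if s == E i then 0 else x i s).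

(* Maximally recoverable local (k,r,h)-code (local groups = rows): for every E
   with exactly one coordinate in each local group, the punctured code is an
   MDS [k+h,k] code, i.e. has dimension k and minimum distance h+1. *)
Definition MR_local_code (L : fieldType) (k r h l : nat)
    (C : {vspace 'M[L]_(l, r.+1)}) : Prop :=
  @local_code L k r h l C /\
  forall E : 'I_l -> 'I_r.+1,
    exists P : {vspace 'M[L]_(l, r.+1)},
      (forall y, y \in P <-> exists2 x, x \in C & y = puncture E x) /\
      \dim P = k /\ min_dist P h.+1.
Arguments MR_local_code {L} k r h {l} C.

From HB Require Import structures.
From mathcomp Require Import all_boot all_order all_algebra all_field.
From mathcomp Require Import zify.
Import GRing.Theory.
Local Open Scope ring_scope.

(* The local parity of row i
   expresses x_(i, E i) through the kept coordinates of the row, and since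
   x |-> x ^+ 2^j is additive in characteristic 2, the heavy parities become
   \sum_c beta_c ^+ 2^j * x_c = 0 (j < h) on the kept coordinates, with
   beta_(i,s) = lam_i * (xi_s + xi_(E i)).  Any at most h of the beta_c are
   linearly independent over F_2: a vanishing sum splits along the rows by the
   independence of the lam_i over F, and within a row it is a sum of at most
   h + 1 distinct xi_s (the shifts xi_(E i) cancel in pairs), which weak
   independence forbids.  Over such elements the Moore matrix is invertible,
   so no nonzero punctured codeword has weight <= h.  This gives minimum
   distance h + 1, injectivity of puncturing and of the restriction to any k
   kept coordinates; a rank count then yields dim C = k, systematic data
   coordinates, and a codeword of weight exactly h + 1. *)

Lemma exprD_pchar2X {R : comNzRingType} (ch2 : 2%N \in [pchar R]) (j : nat) (x y : R) :
  (x + y) ^+ (2 ^ j) = x ^+ (2 ^ j) + y ^+ (2 ^ j).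
Proof. by apply: exprDn_pchar; rewrite (eq_pnat _ (pcharf_eq ch2)) pnatX pnat_id. Qed.

Lemma expr_sum_pchar2X {R : comNzRingType} (ch2 : 2%N \in [pchar R]) (j : nat)
    (I : Type) (r : seq I) (P : pred I) (f : I -> R) :
  (\sum_(i <- r | P i) f i) ^+ (2 ^ j) = \sum_(i <- r | P i) f i ^+ (2 ^ j).
Proof.
apply: (big_morph (fun x => x ^+ (2 ^ j))); first exact: exprD_pchar2X.
by rewrite expr0n expn_eq0.
Qed.

Lemma mulrn_pchar2 {R : nzRingType} (ch2 : 2%N \in [pchar R]) (x : R) (n : nat) :
  x *+ n = x *+ odd n.
Proof.
rewrite -{1}(odd_double_half n) mulrnDr -muln2 mulrnA.
by rewrite (mulrn_pchar ch2) addr0.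
Qed.

Section Moore.
Context {L : fieldType}.
Hypothesis ch2 : 2%N \in [pchar L].

Lemma subset_sum_inj {T : finType} {beta : T -> L} :
    (forall U : {set T}, U != set0 -> \sum_(t in U) beta t != 0) ->
  injective (fun U : {set T} => \sum_(t in U) beta t).
Proof.
move=> indep U V eqUV; apply/eqP; apply: contraT => neqUV.
pose W := [set t | (t \in U) != (t \in V)].
have /indep : W != set0.
  apply: contra neqUV => /eqP W0; apply/eqP/setP => t.
  by have := in_set0 t; rewrite -W0 inE => /negbFE/eqP.
suff -> : \sum_(t in W) beta t = 0 by rewrite eqxx.
transitivity (\sum_(t in U) beta t + \sum_(t in V) beta t).
  rewrite !(big_mkcond (fun t => t \in _)) -big_split /=.
  apply: eq_bigr => t _; rewrite inE.
  by case: (t \in U); case: (t \in V); rewrite ?addr0 ?add0r ?(addrr_pchar2 ch2).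
by rewrite /= eqUV (addrr_pchar2 ch2).
Qed.

Lemma linearized_poly_eq0 {m : nat} {beta v : 'I_m -> L} :
    (forall U : {set 'I_m}, U != set0 -> \sum_(t in U) beta t != 0) ->
    (forall t, \sum_j v j * beta t ^+ (2 ^ j) = 0) ->
  forall j, v j = 0.
Proof.
(* P is additive, so it vanishes at all 2^m subset sums of beta, which are
   distinct, while its degree is below 2^m. *)
move=> indep vbeta0.
pose P : {poly L} := \sum_(j < m) v j *: 'X^(2 ^ j).
have hornerP x : P.[x] = \sum_j v j * x ^+ (2 ^ j).
  by rewrite horner_sum; apply: eq_bigr => j _; rewrite hornerZ hornerXn.
pose sums := [seq \sum_(t in U) beta t | U : {set 'I_m} in powerset [set: 'I_m]].
have uniq_sums : uniq sums by rewrite (map_inj_uniq (subset_sum_inj indep)) enum_uniq.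
have root_sums : all (root P) sums.
  apply/allP => _ /mapP [U _ ->]; apply/eqP; rewrite hornerP.
  under eq_bigr => j _ do rewrite (expr_sum_pchar2X ch2) mulr_sumr.
  by rewrite exchange_big big1 // => t _; apply: vbeta0.
have sizeP : (size P <= 2 ^ m)%N.
  apply: leq_trans (size_sum _ _ _) _; apply/bigmax_leqP => j _.
  apply: leq_trans (size_scale_leq _ _) _.
  by rewrite size_polyXn ltn_exp2l.
have P0 : P = 0.
  apply: contraTeq sizeP => /max_poly_roots /(_ root_sums uniq_sums).
  by rewrite size_map -cardE card_powerset cardsT card_ord -ltnNge.
move=> j; have : P`_(2 ^ j) = 0 by rewrite P0 coef0.
rewrite coef_sum (bigD1 j) //= coefZ coefXn eqxx mulr1 big1 ?addr0 // => i.
by move=> ij; rewrite coefZ coefXn eqn_exp2l // eq_sym val_eqE (negbTE ij) mulr0.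
Qed.

Lemma moore_mx_unit {m : nat} {beta : 'I_m -> L} :
    (forall U : {set 'I_m}, U != set0 -> \sum_(t in U) beta t != 0) ->
  \matrix_(j < m, t < m) beta t ^+ (2 ^ j) \in unitmx.
Proof.
move=> indep; set A := \matrix_(j, t) _.
rewrite -row_free_unit -kermx_eq0; apply/eqP/matrixP => i j; rewrite [RHS]mxE.
apply: (linearized_poly_eq0 (v := kermx A i) indep) => t.
have /matrixP/(_ i t) := mulmx_ker A.
rewrite mxE [RHS]mxE => kerA; rewrite -[RHS]kerA.
by apply: eq_bigr => j' _; rewrite /A mxE.
Qed.

Lemma moore_sum_eq0 {T : finType} (S : {set T}) (beta c : T -> L) :
    (forall U : {set T}, U \subset S -> U != set0 -> \sum_(t in U) beta t != 0) ->
    (forall j, (j < #|S|)%N -> \sum_(t in S) c t * beta t ^+ (2 ^ j) = 0) ->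
  {in S, forall t, c t = 0}.
Proof.
move=> indep eqs t tS; rewrite -(enum_rankK_in tS tS).
move: (enum_rank_in tS t) => q.
set b := fun q => beta (@enum_val _ (mem S) q).
have indep_b U : U != set0 -> \sum_(q in U) b q != 0.
  rewrite -(big_imset _ (in2W enum_val_inj)) -(imset_eq0 enum_val) => U0.
  by apply: indep U0; apply/subsetP => _ /imsetP [p _ ->]; apply: enum_valP.
pose moore : 'M_#|S| := \matrix_(j, p) b p ^+ (2 ^ j).
pose cv := \col_p c (@enum_val _ (mem S) p).
have : moore *m cv = 0.
  apply/colP => j; rewrite !mxE -[RHS](eqs j) // [RHS]big_enum_val.
  by apply: eq_bigr => p _; rewrite !mxE mulrC.
move/(canRL (mulKmx (moore_mx_unit indep_b))); rewrite mulmx0 => /colP/(_ q).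
by rewrite !mxE.
Qed.

End Moore.

Lemma free_coef_eq0 {K : fieldType} {V : vectType K} {I : finType} {f : I -> V}
    {T : {set I}} {e : I -> K} :
    free [seq f i | i in T] -> \sum_(i in T) e i *: f i = 0 ->
  {in T, forall i, e i = 0}.
Proof.
move=> /(@freeP _ _ _ (in_tuple _)) freeT sum0 i iT.
set s := enum T; have iS : i \in s by rewrite mem_enum.
have lt_i : (index i s < size [seq f i | i in T])%N by rewrite size_map index_mem.
rewrite -(nth_index i iS); apply: (freeT (fun q => e (nth i s q)) _ (Ordinal lt_i)).
rewrite -[RHS]sum0 -[RHS]big_enum -/s [RHS](big_nth i) /=.
rewrite -(big_mkord xpredT (fun q => e (nth i s q) *: nth 0 [seq f i | i in T] q)).
by rewrite size_map; apply: eq_big_nat => q /andP [_ lt_q]; rewrite (nth_map i).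
Qed.

Lemma exists_subset_card {T : finType} {A : {set T}} {n : nat} :
  (n <= #|A|)%N -> exists2 B : {set T}, B \subset A & #|B| = n.
Proof.
elim: n => [|n IH] ltnA; first by exists set0; rewrite ?sub0set ?cards0.
have [B BA cardB] := IH (ltnW ltnA).
have : B \proper A by rewrite properEcard BA cardB ltnA.
case/properP => _ [x xA xB]; exists (x |: B).
  by rewrite subUset sub1set xA BA.
by rewrite cardsU1 xB cardB.
Qed.

Section Coordinates.
Context {L : fieldType} {l m : nat}.
Local Notation M := 'M[L]_(l, m).
Implicit Types (K : {set 'I_l * 'I_m}) (x y : M) (U : {vspace M}).

Lemma weight_le_card x K :
  (forall c, c \notin K -> x c.1 c.2 = 0) -> (weight x <= #|K|)%N.
Proof.
move=> x0; apply: subset_leq_card; apply/subsetP => c; rewrite inE.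
by apply: contraR => /x0 ->; rewrite eqxx.
Qed.

Definition restr K x : M := \matrix_(i, s) (if (i, s) \in K then x i s else 0).

Fact restr_is_semilinear K : semilinear (restr K).
Proof.
by split=> [a x|x y]; apply/matrixP => i s; rewrite !mxE;
  case: ifP; rewrite ?mulr0 ?addr0.
Qed.
HB.instance Definition _ K :=
  GRing.isSemilinear.Build L M M _ (restr K) (restr_is_semilinear K).

Fact puncture_is_semilinear E : semilinear (@puncture L l m E).
Proof.
by split=> [a x|x y]; apply/matrixP => i s; rewrite !mxE;
  case: ifP; rewrite ?mulr0 ?addr0.
Qed.
HB.instance Definition _ E :=
  GRing.isSemilinear.Build L M M _ (@puncture L l m E) (puncture_is_semilinear E).

Lemma restr_eq0P K x :
  restr K x = 0 <-> {in K, forall c : 'I_l * 'I_m, x c.1 c.2 = 0}.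
Proof.
split=> [/matrixP x0 c cK | x0].
  by have := x0 c.1 c.2; rewrite !mxE -surjective_pairing cK.
by apply/matrixP => i s; rewrite !mxE; case: ifP => // /x0.
Qed.

Lemma restrE K x : restr K x = \sum_(d in K) x d.1 d.2 *: delta_mx d.1 d.2.
Proof.
apply/matrixP => i s; rewrite mxE summxE.
under eq_bigr => d _ do
  rewrite !mxE [i == _]eq_sym [s == _]eq_sym -xpair_eqE -surjective_pairing.
case: ifP => iK.
  rewrite (bigD1 (i, s)) //= eqxx mulr1 big1 ?addr0 // => d /andP [_ /negbTE ->].
  exact: mulr0.
rewrite big1 // => d dK; case: eqP => [dE | _]; last exact: mulr0.
by rewrite -dE dK in iK.
Qed.

Lemma restr_span K x : restr K x \in <<[seq delta_mx d.1 d.2 | d in K] : seq M>>%VS.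
Proof.
rewrite restrE; apply: memv_suml => d dK; apply/memvZ/memv_span.
by apply: map_f; rewrite mem_enum.
Qed.

Lemma dim_restr_img K U : (\dim (linfun (restr K) @: U) <= #|K|)%N.
Proof.
rewrite -(size_image (fun d => delta_mx d.1 d.2 : M) K).
apply: leq_trans (dim_span _); apply: dimvS; apply/subvP => _ /memv_imgP [x _ ->].
by rewrite lfunE restr_span.
Qed.

Lemma restr_ker K U : (#|K| < \dim U)%N ->
  exists2 x, x \in U & x != 0 /\ restr K x = 0.
Proof.
move=> ltKU; set W := (U :&: lker (linfun (restr K)))%VS.
have : W != 0%VS.
  rewrite -dimv_eq0 -lt0n -(ltn_add2r (\dim (linfun (restr K) @: U))) add0n.
  by rewrite limg_ker_dim (leq_ltn_trans (dim_restr_img K U)).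
rewrite -vpick0 => nz; have := memv_pick W.
rewrite memv_cap memv_ker lfunE => /andP [xU /eqP x0].
by exists (vpick W).
Qed.

Lemma restr_inj_dim K U :
  (forall x, x \in U -> restr K x = 0 -> x = 0) -> (\dim U <= #|K|)%N.
Proof.
move=> inj; rewrite leqNgt; apply/negP => /restr_ker [x xU [nx /inj x0]].
by move: nx; rewrite x0 ?eqxx.
Qed.

Section Systematic.
Context {U : {vspace M}} {D : {set 'I_l * 'I_m}}.
Hypothesis restr_inj : forall x, x \in U -> restr D x = 0 -> x = 0.
Hypothesis dimU : \dim U = #|D|.

Lemma restr_img :
  (linfun (restr D) @: U)%VS = <<[seq delta_mx d.1 d.2 | d in D] : seq M>>%VS.
Proof.
apply/eqP; rewrite eqEdim; apply/andP; split.
  by apply/subvP => _ /memv_imgP [x _ ->]; rewrite lfunE restr_span.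
rewrite limg_dim_eq ?dimU.
  by rewrite -[X in (_ <= X)%N](size_image (fun d => delta_mx d.1 d.2 : M)) dim_span.
apply/eqP; rewrite -subv0; apply/subvP => x; rewrite memv_cap memv_ker lfunE memv0.
by case/andP => xU /eqP /(restr_inj _ xU) ->.
Qed.

Lemma restr_extend_uniq y :
  exists! x, x \in U /\ forall c, c \in D -> x c.1 c.2 = y c.1 c.2.
Proof.
have := restr_span D y; rewrite -restr_img => /memv_imgP [x xU].
rewrite lfunE => /eqP; rewrite -subr_eq0 -linearB => /eqP/restr_eq0P yx.
exists x; split.
  by split=> // c cD; have /eqP := yx c cD; rewrite !mxE subr_eq0 => /eqP ->.
move=> x' [x'U x'y]; apply/eqP; rewrite -subr_eq0; apply/eqP/restr_inj; first exact: memvB.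
apply/restr_eq0P => c cD; have /eqP := yx c cD.
by rewrite !mxE x'y // subr_eq0 => /eqP ->; rewrite subrr.
Qed.

Lemma restr_coord_lincomb c : exists w : 'I_l * 'I_m -> L,
  forall x, x \in U -> x c.1 c.2 = \sum_(d in D) w d * x d.1 d.2.
Proof.
have u_ex d : exists u : M, u \in U /\
    forall c', c' \in D -> u c'.1 c'.2 = (delta_mx d.1 d.2 : M) c'.1 c'.2.
  by have [x [xP _]] := restr_extend_uniq (delta_mx d.1 d.2); exists x.
have [u uP] := fin_all_exists (U := fun _ => M) u_ex.
exists (fun d => u d c.1 c.2) => x xU.
pose z := \sum_(d in D) x d.1 d.2 *: u d.
have zU : z \in U by apply: memv_suml => d _; apply/memvZ; case: (uP d).
have zx c' : c' \in D -> z c'.1 c'.2 = x c'.1 c'.2.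
  move=> c'D; have := congr1 (fun y : M => y c'.1 c'.2) (restrE D x).
  rewrite mxE -surjective_pairing c'D => ->; rewrite !summxE.
  by apply: eq_bigr => d dD; rewrite !mxE (proj2 (uP d) c' c'D) mxE.
have [x0 [_ x0_uniq]] := restr_extend_uniq x.
have xz : x = z by rewrite -(x0_uniq x (conj xU (fun _ _ => erefl))) (x0_uniq z (conj zU zx)).
by rewrite {1}xz summxE; apply: eq_bigr => d _; rewrite mxE mulrC.
Qed.

End Systematic.

End Coordinates.

Section WeaklyIndependent.
Context {F : finFieldType} {T : finType} {xi : T -> F} {h : nat}.
Hypothesis ch2 : 2%N \in [pchar F].
Hypothesis xi_inj : injective xi.
Hypothesis xi_wi : weakly_indep (if odd h then h.+1 else h) [set xi s | s : T].

Lemma weakly_indep_sum (V : {set T}) :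
    (2 <= #|V|)%N -> (#|V| <= if odd h then h.+1 else h)%N ->
  \sum_(s in V) xi s != 0.
Proof.
move=> ge2 le_t; have sub : xi @: V \subset [set xi s | s : T].
  by apply/subsetP => _ /imsetP [s _ ->]; apply: imset_f.
have := xi_wi _ sub; rewrite card_imset // big_imset //; first exact.
by move=> ? ? _ _ /xi_inj.
Qed.

(* in characteristic 2 the shifts by xi e cancel in pairs, so the sum is a
   sum of distinct elements over V or over e |: V, depending on parity *)
Lemma weakly_indep_sum_shift (V : {set T}) (e : T) :
  e \notin V -> (0 < #|V| <= h)%N -> \sum_(s in V) (xi s + xi e) != 0.
Proof.
move=> eV /andP [V0 Vh]; rewrite big_split /= sumr_const (mulrn_pchar2 ch2).
case oddV : (odd #|V|); rewrite ?mulr1n ?mulr0n ?addr0.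
  rewrite addrC -big_setU1 //; apply: weakly_indep_sum; rewrite cardsU1 eV //.
  case: ifP => oddh; first by rewrite add1n ltnS.
  rewrite add1n ltn_neqAle Vh andbT; apply/eqP => Vh_eq.
  by rewrite -Vh_eq oddV in oddh.
apply: weakly_indep_sum; last by case: ifP => //; lia.
by move: V0 oddV; case: #|V| => [|[]].
Qed.

End WeaklyIndependent.

Section Construction.
Context {F : finFieldType} {L : fieldExtType F} {r l : nat}.
Variables (h : nat) (xi : 'I_r.+1 -> F) (lam : 'I_l -> L).
Hypothesis chF : 2%N \in [pchar F].
Hypothesis xi_inj : injective xi.
Hypothesis xi_wi : weakly_indep (if odd h then h.+1 else h) [set xi s | s : 'I_r.+1].
Hypothesis lam_wi : wise_indep h lam.

Let chL : 2%N \in [pchar L]. Proof. by rewrite (pchar_lalg L). Qed.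

Local Notation M := 'M[L]_(l, r.+1).
Local Notation pos := ('I_l * 'I_r.+1)%type.

Definition heavy (j : nat) (x : M) : L :=
  \sum_(i < l) \sum_(s < r.+1) (lam i * (xi s)%:A) ^+ (2 ^ j) * x i s.

Definition syndrome (x : M) : 'rV[L]_(h + l) :=
  \row_q match split q with
         | inl j => heavy j x | inr i => \sum_(s < r.+1) x i s end.

Fact syndrome_is_semilinear : semilinear syndrome.
Proof.
split=> [a x|x y]; apply/rowP => q; rewrite !mxE; case: split => [j|i];
  rewrite /heavy.
- rewrite mulr_sumr; apply: eq_bigr => i _; rewrite mulr_sumr.
  by apply: eq_bigr => s _; rewrite mxE mulrCA.
- by rewrite mulr_sumr; apply: eq_bigr => s _; rewrite mxE.
- rewrite -big_split; apply: eq_bigr => i _; rewrite -big_split.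
  by apply: eq_bigr => s _; rewrite mxE mulrDr.
- by rewrite -big_split; apply: eq_bigr => s _; rewrite mxE.
Qed.
HB.instance Definition _ :=
  GRing.isSemilinear.Build L M 'rV[L]_(h + l) _ syndrome syndrome_is_semilinear.

Definition code : {vspace M} := lker (linfun syndrome).

Lemma mem_code x : x \in code <->
  (forall j : 'I_h, heavy j x = 0) /\ (forall i, \sum_(s < r.+1) x i s = 0).
Proof.
rewrite memv_ker lfunE; split=> [/eqP/rowP x0 | [heavy0 local0]].
  by split=> [j|i]; [have := x0 (unsplit (inl j)) | have := x0 (unsplit (inr i))];
    rewrite !mxE unsplitK.
by apply/eqP/rowP => q; rewrite !mxE; case: split.
Qed.

Definition kept (E : 'I_l -> 'I_r.+1) : {set pos} := [set c | c.2 != E c.1].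

(* Eliminating x_(i, E i) by the local parity of row i turns the heavy
   parities into equations on the kept coordinates with these coefficients. *)
Definition beta (E : 'I_l -> 'I_r.+1) (c : pos) : L :=
  lam c.1 * (xi c.2 + xi (E c.1))%:A.

Lemma card_kept E : #|kept E| = (l * r)%N.
Proof.
have -> : kept E = ~: [set (i, E i) | i : 'I_l].
  apply/setP => -[i s]; rewrite !inE /=; apply/idP/idP.
    by apply: contra => /imsetP [i' _ [-> ->]].
  by apply: contra => /eqP sE; apply/imsetP; exists i; rewrite ?sE.
apply/eqP; rewrite -(eqn_add2l #|[set (i, E i) | i : 'I_l]|) cardsC.
by rewrite card_imset ?card_prod ?card_ord ?mulnS // => i j [].
Qed.

Lemma code_local_parity E x : x \in code ->
  forall i, x i (E i) = \sum_(s | s != E i) x i s.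
Proof.
case/mem_code => _ local0 i; have := local0 i; rewrite (bigD1 (E i)) //= => /eqP.
by rewrite addr_eq0 => /eqP ->; rewrite (oppr_pchar2 chL).
Qed.

Lemma code_heavy_kept E x (j : 'I_h) : x \in code ->
  \sum_(c in kept E) beta E c ^+ (2 ^ j) * x c.1 c.2 = 0.
Proof.
move=> xC; case/mem_code: (xC) => heavy0 _; rewrite -[RHS](heavy0 j) /heavy.
transitivity (\sum_i \sum_(s | s != E i) beta E (i, s) ^+ (2 ^ j) * x i s).
  by rewrite pair_big_dep; apply: eq_big => -[i s] //; rewrite inE.
apply: eq_bigr => i _; rewrite [RHS](bigD1 (E i)) //= (code_local_parity E _ xC) mulr_sumr.
rewrite -big_split /=; apply: eq_bigr => s _.
by rewrite -mulrDl /beta /= scalerDl mulrDr (exprD_pchar2X chL) addrC.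
Qed.

Lemma beta_sum_neq0 E (U : {set pos}) : U \subset kept E -> (#|U| <= h)%N ->
  U != set0 -> \sum_(c in U) beta E c != 0.
Proof.
move=> UE Uh /set0Pn [[i0 s0] c0U].
pose row_of i := [set s | (i, s) \in U].
pose e i : F := \sum_(s in row_of i) (xi s + xi (E i)).
pose T := [set c.1 | c in U].
have sumU : \sum_(c in U) beta E c = \sum_(i in T) e i *: lam i.
  transitivity (\sum_i e i *: lam i).
    under [RHS]eq_bigr => i _ do rewrite scaler_suml.
    rewrite pair_big_dep /=; apply: eq_big => [[i s]|[i s] _]; first by rewrite inE.
    by rewrite /beta /= mulr_algr.
  rewrite [RHS]big_mkcond; apply: eq_bigr => i _; case: ifP => // iT.
  rewrite /e big_pred0 ?scale0r // => s; rewrite inE; apply/negP => isU.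
  by move/negP: iT; apply; apply/imsetP; exists (i, s).
have e_neq0 : e i0 != 0.
  rewrite /e; apply: (weakly_indep_sum_shift chF xi_inj xi_wi).
    by rewrite inE; apply/negP => /(subsetP UE); rewrite inE /= eqxx.
  apply/andP; split; first by apply/card_gt0P; exists s0; rewrite inE.
  have row_inj : injective (pair i0 : 'I_r.+1 -> pos) by move=> s t [].
  apply: leq_trans Uh; rewrite -(card_imset _ row_inj).
  by apply: subset_leq_card; apply/subsetP => _ /imsetP [s sU ->]; rewrite inE in sU.
apply: contra e_neq0; rewrite sumU => /eqP sum0.
have T_h : (#|T| <= h)%N := leq_trans (leq_imset_card _ _) Uh.
apply/eqP; apply: (free_coef_eq0 (lam_wi _ T_h) sum0).
by apply/imsetP; exists (i0, s0).
Qed.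

Lemma puncture_inj E x : x \in code -> puncture E x = 0 -> x = 0.
Proof.
move=> xC /matrixP x0; have kept0 i s : s != E i -> x i s = 0.
  by move=> sE; have := x0 i s; rewrite !mxE (negbTE sE).
apply/matrixP => i s; rewrite mxE; have [-> | /kept0 //] := eqVneq s (E i).
by rewrite (code_local_parity E _ xC); apply: big1 => s' /kept0.
Qed.

(* The support of a punctured codeword lies in the kept coordinates; on a
   support of size at most h the heavy equations form a Moore system. *)
Lemma puncture_weight_gt E x : x \in code -> puncture E x != 0 ->
  (h < weight (puncture E x))%N.
Proof.
move=> xC; set y := puncture E x => y_neq0; rewrite ltnNge; apply/negP => yh.
pose S := [set c : pos | y c.1 c.2 != 0].
have yx c : c \in kept E -> y c.1 c.2 = x c.1 c.2 by rewrite inE mxE => /negbTE ->.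
have SE : S \subset kept E.
  by apply/subsetP => c; rewrite !inE mxE; case: (c.2 == E c.1); rewrite ?eqxx.
have [c cS] : exists c, c \in S.
  apply/set0Pn; apply: contra y_neq0 => /eqP S0; apply/eqP/matrixP => i s.
  have : (i, s) \notin S by rewrite S0 inE.
  by rewrite inE negbK => /eqP ->; rewrite mxE.
suff xc0 : x c.1 c.2 = 0 by move: (cS); rewrite inE yx ?(subsetP SE) // xc0 eqxx.
apply: (moore_sum_eq0 chL S (beta E) (fun c => x c.1 c.2)) cS.
  move=> U US; apply: beta_sum_neq0; first exact: subset_trans US SE.
  exact: leq_trans (subset_leq_card US) yh.
move=> j jS; have jh : (j < h)%N := leq_trans jS yh.
rewrite -[RHS](code_heavy_kept E _ (Ordinal jh) xC) [RHS](big_setID S) /= (setIidPr SE).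
rewrite [X in _ = _ + X]big1 ?addr0; first by apply: eq_bigr => d _; rewrite mulrC.
move=> d; rewrite !inE negbK => /andP [/eqP yd0 dE].
by rewrite -yx ?inE // yd0 mulr0.
Qed.

Lemma weight_puncture_restr {E} {K : {set pos}} {x : M} : K \subset kept E ->
  restr K x = 0 -> (weight (puncture E x) <= #|kept E| - #|K|)%N.
Proof.
move=> KE /restr_eq0P xK0; rewrite -(setIidPr KE) -cardsD.
apply: weight_le_card => c; rewrite !inE negb_and negbK mxE => /orP [cK | /negPn -> //].
by case: ifP => // _; apply: xK0.
Qed.

Lemma restr_inj_kept {E} {D : {set pos}} : D \subset kept E ->
    (#|kept E| - #|D| <= h)%N ->
  forall x, x \in code -> restr D x = 0 -> x = 0.
Proof.
move=> DE Dh x xC xD0; apply: (puncture_inj E _ xC); apply/eqP.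
apply: contraT => /(puncture_weight_gt E _ xC); rewrite ltnNge.
by rewrite (leq_trans (weight_puncture_restr DE xD0)).
Qed.

Lemma exists_data_coords E k : (l * r = k + h)%N ->
  exists2 D : {set pos}, D \subset kept E &
    #|D| = k /\ forall x, x \in code -> restr D x = 0 -> x = 0.
Proof.
move=> lr; have k_le : (k <= #|kept E|)%N by rewrite card_kept lr leq_addr.
have [D DE cardD] := exists_subset_card k_le; exists D => //; split=> //.
by apply: (restr_inj_kept DE); rewrite card_kept cardD lr addKn.
Qed.

Lemma dim_code k : (l * r = k + h)%N -> \dim code = k.
Proof.
move=> lr; apply/eqP; rewrite eqn_leq; apply/andP; split.
  have [D _ [<- D_inj]] := exists_data_coords (fun=> ord0) k lr.
  exact: restr_inj_dim D_inj.
have := limg_ker_dim (linfun syndrome) fullv; rewrite capfv dimvf dim_matrix.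
have img_le : (\dim (limg (linfun syndrome)) <= h + l)%N.
  by apply: leq_trans (dimvS (subvf _)) _; rewrite dimvf dim_matrix mul1r.
move=> dimE; rewrite -(leq_add2r (\dim (limg (linfun syndrome)))) dimE.
apply: leq_trans (leq_add (leqnn k) img_le) _.
by rewrite addnA -lr -[(l * r.+1)%R]/(l * r.+1)%N mulnS addnC.
Qed.

Lemma code_local_code k : (l * r = k + h)%N -> @local_code L k r h l code.
Proof.
move=> lr; split=> //; split; first exact: dim_code.
pose p (i : 'I_l) := (ord0 : 'I_r.+1).
have [D Dp [cardD D_inj]] := exists_data_coords p k lr.
have dimD : \dim code = #|D| by rewrite cardD (dim_code _ lr).
exists p, D; split=> //; split; first by move=> c /(subsetP Dp); rewrite inE.
split; first exact: restr_extend_uniq D_inj dimD.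
split; first by move=> c _ _; apply: restr_coord_lincomb D_inj dimD c.
by move=> x xC i; apply: code_local_parity.
Qed.

Lemma code_puncture_MDS k E : (0 < k)%N -> (l * r = k + h)%N ->
  exists P : {vspace M},
    (forall y, y \in P <-> exists2 x, x \in code & y = puncture E x) /\
    \dim P = k /\ min_dist P h.+1.
Proof.
move=> k_gt0 lr; have dimC := dim_code _ lr.
set P := (linfun (puncture E) @: code)%VS.
have memP x : x \in code -> puncture E x \in P.
  by move=> xC; have := memv_img (linfun (puncture E)) xC; rewrite lfunE.
have ker0 : (code :&: lker (linfun (puncture E)))%VS = 0%VS.
  apply/eqP; rewrite -subv0; apply/subvP => x; rewrite memv_cap memv0 => /andP [xC].
  by rewrite memv_ker lfunE => /eqP /(puncture_inj E _ xC) ->.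
exists P; split.
  move=> y; split; last by case=> x xC ->; apply: memP.
  by case/memv_imgP => x xC ->; exists x; rewrite ?lfunE.
split; first by rewrite limg_dim_eq // dimC.
split; last by move=> _ /memv_imgP [x xC ->]; rewrite lfunE; apply: puncture_weight_gt.
(* a codeword vanishing on k - 1 kept coordinates has punctured weight <= h + 1 *)
have km1 : (k.-1 <= #|kept E|)%N by rewrite card_kept lr; lia.
have [K KE cardK] := exists_subset_card km1.
have [|x xC [x_neq0 xK0]] := restr_ker K code; first by rewrite cardK dimC ltn_predL.
have y_neq0 : puncture E x != 0.
  by apply: contra x_neq0 => /eqP /(puncture_inj E _ xC) ->.
exists (puncture E x); split; first exact: memP.
split=> //; apply/eqP; rewrite eqn_leq puncture_weight_gt // andbT.
by apply: leq_trans (weight_puncture_restr KE xK0) _; rewrite card_kept cardK lr; lia.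
Qed.

End Construction.

Theorem proposition14 (F : finFieldType) (L : fieldExtType F)
    (k r h a b l : nat) (xi : 'I_r.+1 -> F) (lam : 'I_l -> L) :
  (0 < k)%N -> (0 < r)%N -> (0 < h)%N -> (l * r = k + h)%N ->
  (0 < a)%N -> (0 < b)%N -> #|F| = (2 ^ a)%N -> b = (a * \dim {:L})%N ->
  injective xi ->
  weakly_indep (if odd h then h.+1 else h) [set xi s | s : 'I_r.+1] ->
  injective lam ->
  wise_indep h lam ->
  exists C : {vspace 'M[L]_(l, r.+1)},
    (forall x : 'M[L]_(l, r.+1), x \in C <->
       ((forall j : 'I_h,
           \sum_(i < l) \sum_(s < r.+1)
              (lam i * (xi s)%:A) ^+ (2 ^ j) * x i s = 0) /\
        (forall i : 'I_l, \sum_(s < r.+1) x i s = 0))) /\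
    MR_local_code k r h C.
Proof.
move=> k_gt0 _ _ lr _ _ cardF _ xi_inj xi_wi _ lam_wi.
have chF : 2%N \in [pchar F] := card_finPcharP cardF isT.
exists (code h xi lam); split; first exact: mem_code.
split; first exact: code_local_code.
by move=> E; apply: code_puncture_MDS.
Qed.
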